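(* Let $X=X_1\times X_2$ be as in the context. For $j=1,2$ let $-\mathbf{A}_j:\mathrm{dom}(\mathbf{A}_j)\subset X_j\to X_j$ be generators of strongly continuous contraction semigroups, and let $\mathbf{B}_1:X_2\to X_1$, $\mathbf{B}_2:X_1\to X_2$ be bounded. Assume moreover that $\mathcal{A}$ and $\mathcal{C}$ are boundedly invertible. Then there is a constant $C_2=C_2(\|\mathcal{A}^{-1}\|,\|\mathcal{A}^{-1}\mathcal{B}\|)>0$ such that for all $\tau>0$, \[ \|\mathcal{A}^{-1}(\mathcal{T}(\tau)-\mathrm{e}^{-\tau\mathcal{C}})\|\le C_2\,(1+\mathrm{e}^{\tau\|\mathcal{B}\|})\,\tau. \]
   Context: $X=X_1\times X_2$ for Banach spaces $X_1,X_2$, with norm $\|(x,y)\|^2=\|x\|_{X_1}^2+\|y\|_{X_2}^2$. For $\tau\ge0$ set $\mathbf{E}_j(\tau)=\mathrm{e}^{-\tau\mathbf{A}_j}$ and $\mathbf{X}_j(\tau)=\int_0^\tau \mathrm{e}^{-\sigma\mathbf{A}_j}\,\mathrm{d}\sigma\,\mathbf{B}_j$ (strong integral). The split-step operator on $X$ is \[ \mathcal{T}(\tau)=\begin{pmatrix}\mathbf{E}_1(\tau) & \mathbf{X}_1(\tau)\\ \mathbf{X}_2(\tau)\mathbf{E}_1(\tau) & \mathbf{X}_2(\tau)\mathbf{X}_1(\tau)+\mathbf{E}_2(\tau)\end{pmatrix}. \] $\mathcal{A}=\mathrm{diag}(\mathbf{A}_1,\mathbf{A}_2)$ on $\mathrm{dom}(\mathcal{A})=\mathrm{dom}(\mathbf{A}_1)\times\mathrm{dom}(\mathbf{A}_2)$;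 $\mathcal{B}=\begin{pmatrix}0&\mathbf{B}_1\\\mathbf{B}_2&0\end{pmatrix}$ (bounded on $X$, $\|\mathcal{B}\|$ its operator norm on $X$); $\mathcal{C}=\mathcal{A}-\mathcal{B}$ with $\mathrm{dom}(\mathcal{C})=\mathrm{dom}(\mathcal{A})$, so $-\mathcal{C}$ generates the strongly continuous semigroup $(\mathrm{e}^{-t\mathcal{C}})_{t\ge0}$. *)

From HB Require Import structures.
From mathcomp Require Import all_boot all_order all_algebra.
From mathcomp Require Import all_classical all_reals all_analysis.
Set Implicit Arguments. Unset Strict Implicit. Unset Printing Implicit Defensive.
Import Order.TTheory GRing.Theory Num.Theory.
Import numFieldNormedType.Exports.
Local Open Scope classical_set_scope.
Local Open Scope ring_scope.

Definition is_linear (R : realType) (U V : normedModType R) (f : U -> V) :=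
  forall (a : R) (x y : U), f (a *: x + y) = a *: f x + f y.

(* Strongly continuous semigroup (only t >= 0 matters). *)
Definition C0_semigroup (R : realType) (V : normedModType R) (T : R -> V -> V) :=
  [/\ forall t, 0 <= t -> is_linear (T t),
      forall x, T 0 x = x,
      forall s t x, 0 <= s -> 0 <= t -> T (s + t) x = T s (T t x),
      forall t, 0 <= t -> exists M : R, forall y, `|T t y| <= M * `|y|
    & forall x, T t x @[t --> 0^'+] --> x].

Definition contraction_C0_semigroup (R : realType) (V : normedModType R)
  (T : R -> V -> V) :=
  C0_semigroup T /\ forall t x, 0 <= t -> `|T t x| <= `|x|.

Definition generates (R : realType) (V : normedModType R) (T : R -> V -> V)
  (D : set V) (G : V -> V) :=
  forall x, (D x <-> cvg ((t^-1 *: (T t x - x)) @[t --> 0^'+])) /\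
            (D x -> (t^-1 *: (T t x - x)) @[t --> 0^'+] --> G x).

Definition Rint (R : realType) (V : normedModType R) (f : R -> V) (a b : R) : V :=
  lim ((fun n : nat => ((b - a) / n.+1%:R) *:
          \sum_(i < n.+1) f (a + i%:R * (b - a) / n.+1%:R)) @ \oo).

Definition norm2 (R : realType) (V1 V2 : normedModType R) (p : V1 * V2) : R :=
  Num.sqrt (`|p.1| ^+ 2 + `|p.2| ^+ 2).

Definition opnorm2 (R : realType) (V1 V2 : normedModType R)
  (f : V1 * V2 -> V1 * V2) : R :=
  sup [set norm2 (f v) | v in [set v : V1 * V2 | norm2 v <= 1]].

Definition bounded_linear2 (R : realType) (V1 V2 : normedModType R)
  (f : V1 * V2 -> V1 * V2) :=
  is_linear f /\ exists M : R, forall v, norm2 (f v) <= M * norm2 v.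

Definition bounded_inverse (R : realType) (V1 V2 : normedModType R)
  (D : set (V1 * V2)) (G : V1 * V2 -> V1 * V2) (K : V1 * V2 -> V1 * V2) :=
  [/\ bounded_linear2 K,
      forall v, D (K v) /\ G (K v) = v
    & forall v, D v -> K (G v) = v].

Definition Xop (R : realType) (U V : normedModType R) (E : R -> V -> V)
  (B : U -> V) (tau : R) (z : U) : V :=
  Rint (fun s => E s (B z)) 0 tau.

Definition split_step (R : realType) (V1 V2 : normedModType R)
  (E1 : R -> V1 -> V1) (E2 : R -> V2 -> V2) (B1 : V2 -> V1) (B2 : V1 -> V2)
  (tau : R) (v : V1 * V2) : V1 * V2 :=
  (E1 tau v.1 + Xop E1 B1 tau v.2,
   Xop E2 B2 tau (E1 tau v.1) + Xop E2 B2 tau (Xop E1 B1 tau v.2) + E2 tau v.2).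

From Pilot Require Import Defs.
From HB Require Import structures.
From mathcomp Require Import all_boot all_order all_algebra.
From mathcomp Require Import all_classical all_reals all_analysis.
From mathcomp Require Import ring lra.
Import Order.TTheory GRing.Theory Num.Theory.
Import numFieldNormedType.Exports.
Local Open Scope classical_set_scope.
Local Open Scope ring_scope.
Set Implicit Arguments. Unset Strict Implicit. Unset Printing Implicit Defensive.

(* Let E := diag(E_1, E_2), generated by -A.  For q in dom A the Riemann sums of
   s |-> E(s) A q converge to q - E(tau) q, so X(tau) := int_0^tau E(s) ds B equals
   (1 - E(tau)) A^-1 B; the X_j(tau) are its off-diagonal entries and
   T(tau) (x, y) = E(tau) (x, y) + X(tau) (E_1(tau) x, y) + X(tau) (X_1(tau) y, 0).
   Since A^-1 commutes with E and |q - E(tau) q| <= tau |A q|, this gives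
   |A^-1 (T(tau) - 1)| <= tau (1 + c + c tau |B|) with c = |A^-1 B|.
   For S(t) = e^(-tC), Dini's lemma applied to s |-> e^(-s |B|) |S(s) x| - |x| on dom A
   gives |S(t)| <= e^(t |B|); the local boundedness of S near 0 that it needs comes
   from Banach-Steinhaus.  Writing v = C y, A^-1 (S(tau) - 1) v = (1 - A^-1 B) (S(tau) y - y)
   and |S(tau) y - y| <= tau e^(tau |B|) |C y|.
   All estimates are made in the max norm of X_1 * X_2, within a factor 2 of the euclidean
   norm; the max-norm bound of B is at most its euclidean operator norm, so the exponent
   is unaffected. *)

Section LinearMaps.
Variables (R : realType) (U V : normedModType R) (f : U -> V).
Hypothesis f_lin : is_linear f.

Lemma is_linear0 : f 0 = 0.
Proof.
have := f_lin 1 0 0; rewrite !scale1r addr0 => f00.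
by apply: (@addrI _ (f 0)); rewrite addr0 -f00.
Qed.

Lemma is_linearD x y : f (x + y) = f x + f y.
Proof. by have := f_lin 1 x y; rewrite !scale1r. Qed.

Lemma is_linearZ a x : f (a *: x) = a *: f x.
Proof. by rewrite -[a *: x]addr0 f_lin is_linear0 addr0. Qed.

Lemma is_linearN x : f (- x) = - f x.
Proof. by rewrite -scaleN1r is_linearZ scaleN1r. Qed.

Lemma is_linearB x y : f (x - y) = f x - f y.
Proof. by rewrite is_linearD is_linearN. Qed.

Lemma is_linear_continuous : (exists M, forall x, `|f x| <= M * `|x|) -> continuous f.
Proof.
move=> [M fM] x; apply/cvgrPdist_le => e e0.
have M1 : 0 < `|M| + 1 by rewrite ltr_pwDr // normr_ge0.
have: \forall y \near x, `|x - y| <= e / (`|M| + 1) by apply: cvgr_dist_le; rewrite ?divr_gt0.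
apply: filterS => y xy; rewrite -is_linearB; apply: (le_trans (fM _)).
apply: (@le_trans _ _ ((`|M| + 1) * `|x - y|)).
  by apply: ler_wpM2r; [exact: normr_ge0 | rewrite (le_trans (ler_norm M)) // lerDl].
by rewrite -ler_pdivlMl // mulrC.
Qed.

Lemma is_linear_unit_ball_bound M :
  (forall x, `|x| <= 1 -> `|f x| <= M) -> forall x, `|f x| <= M * `|x|.
Proof.
move=> fM x; have [->|x0] := eqVneq x 0; first by rewrite is_linear0 !normr0 mulr0.
have nx : 0 < `|x| by rewrite normr_gt0.
have ex : x = `|x| *: (`|x|^-1 *: x) by rewrite scalerA mulfV ?gt_eqF // scale1r.
rewrite {1}ex is_linearZ normrZ normr_id mulrC ler_pM2r //.
by apply: fM; rewrite normrZ normfV normr_id mulVf ?gt_eqF.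
Qed.

Lemma is_linear_bound_dense (P : set U) k :
  (exists M, forall x, `|f x| <= M * `|x|) ->
  (forall v e, 0 < e -> exists2 u, P u & `|v - u| <= e) -> 0 <= k ->
  (forall u, P u -> `|f u| <= k * `|u|) -> forall v, `|f v| <= k * `|v|.
Proof.
move=> [M fM] P_dense k0 fP v; apply/ler_addgt0Pr => e e0.
have kM : 0 < k + `|M| + 1 by rewrite ltr_pwDr // addr_ge0.
have [u Pu vu] := P_dense v _ (divr_gt0 e0 kM).
have -> : v = u + (v - u) by rewrite subrKC.
rewrite is_linearD; apply: le_trans (ler_normD _ _) _.
have fvu : `|f (v - u)| <= `|M| * `|v - u|.
  by apply: le_trans (fM _) _; rewrite ler_wpM2r ?normr_ge0 ?ler_norm.
have nu : `|u| <= `|v| + `|v - u| by have := ler_normB v (v - u); rewrite opprB subrKC.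
have : k * `|v - u| + `|M| * `|v - u| <= e.
  rewrite -mulrDl; apply: le_trans (_ : _ <= (k + `|M| + 1) * (e / (k + `|M| + 1))) _.
    by apply: ler_pM; rewrite ?addr_ge0 ?normr_ge0 ?lerDl.
  by rewrite mulrC divfK ?gt_eqF.
have := fP u Pu; have := ler_wpM2l k0 nu; rewrite mulrDr subrKC; lra.
Qed.

End LinearMaps.

Section Norm2.
Variables (R : realType) (V1 V2 : normedModType R).
Implicit Types p : V1 * V2.

Lemma prod_normE p : `|p| = Num.max `|p.1| `|p.2|.
Proof. by []. Qed.

Lemma norm2_ge0 p : 0 <= norm2 p.
Proof. exact: sqrtr_ge0. Qed.

Lemma norm_fst_le_norm2 p : `|p.1| <= norm2 p.
Proof.
by rewrite -[leLHS]normr_id -sqrtr_sqr ler_wsqrtr // lerDl sqr_ge0.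
Qed.

Lemma norm_snd_le_norm2 p : `|p.2| <= norm2 p.
Proof.
by rewrite -[leLHS]normr_id -sqrtr_sqr ler_wsqrtr // lerDr sqr_ge0.
Qed.

Lemma norm2_le_normD p : norm2 p <= `|p.1| + `|p.2|.
Proof.
have p1 := normr_ge0 p.1; have p2 := normr_ge0 p.2.
rewrite -[leRHS]ger0_norm ?addr_ge0 // -sqrtr_sqr ler_wsqrtr //; nra.
Qed.

Lemma norm_le_norm2 p : `|p| <= norm2 p.
Proof. by rewrite prod_normE ge_max norm_fst_le_norm2 norm_snd_le_norm2. Qed.

Lemma norm2_le_norm p : norm2 p <= 2 * `|p|.
Proof.
have h1 : `|p.1| <= `|p| by rewrite prod_normE le_max lexx.
have h2 : `|p.2| <= `|p| by rewrite prod_normE le_max lexx orbT.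
have := norm2_le_normD p; lra.
Qed.

Lemma norm2Z (a : R) p : norm2 (a *: p) = `|a| * norm2 p.
Proof.
by rewrite /norm2 /= !normrZ !exprMn -mulrDr sqrtrM ?sqr_ge0 // sqrtr_sqr normr_id.
Qed.

Lemma norm2_0 : norm2 (0 : V1 * V2) = 0.
Proof. by rewrite /norm2 /= !normr0 expr0n /= add0r sqrtr0. Qed.

Lemma norm2_gt0 p : p != 0 -> 0 < norm2 p.
Proof. by rewrite -normr_gt0 => /lt_le_trans; apply; exact: norm_le_norm2. Qed.

Lemma opnorm2_le (f : V1 * V2 -> V1 * V2) K :
  (forall v, norm2 v <= 1 -> norm2 (f v) <= K) -> opnorm2 f <= K.
Proof.
move=> fK; apply: ge_sup; last by move=> _ [v /= v1 <-]; exact: fK.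
by exists (norm2 (f 0)), 0; rewrite //= norm2_0.
Qed.

Section BoundedLinear.
Variable f : V1 * V2 -> V1 * V2.
Hypothesis f_bl : bounded_linear2 f.

Let unit_ball_image := [set norm2 (f v) | v in [set v | norm2 v <= 1]].

Let has_sup_unit_ball_image : has_sup unit_ball_image.
Proof.
case: f_bl => _ [M fM]; split.
  by exists (norm2 (f 0)), 0; rewrite //= norm2_0.
exists `|M| => _ [v /= v1 <-]; apply: (le_trans (fM v)).
apply: (le_trans (ler_norm _)); rewrite normrM (ger0_norm (norm2_ge0 v)).
by rewrite -[leRHS]mulr1 ler_wpM2l.
Qed.

Lemma norm2_le_opnorm2 v : norm2 (f v) <= opnorm2 f * norm2 v.
Proof.
have [-> | v0] := eqVneq v 0.
  by rewrite (is_linear0 f_bl.1) norm2_0 mulr0.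
have nv := norm2_gt0 v0; pose u := (norm2 v)^-1 *: v.
have : norm2 (f u) <= opnorm2 f.
  apply: sup_upper_bound; first exact: has_sup_unit_ball_image.
  have nv0 : 0 <= (norm2 v)^-1 by rewrite invr_ge0 ltW.
  by exists u => //=; rewrite /u norm2Z ger0_norm // mulVf ?gt_eqF.
rewrite /u (is_linearZ f_bl.1) norm2Z ger0_norm ?invr_ge0 ?(ltW nv) //.
by rewrite ler_pdivrMl // mulrC.
Qed.

Lemma opnorm2_ge0 : 0 <= opnorm2 f.
Proof.
apply: le_trans (norm2_ge0 (f 0)) _; apply: sup_upper_bound.
  exact: has_sup_unit_ball_image.
by exists 0; rewrite //= norm2_0.
Qed.

End BoundedLinear.

Lemma bounded_linear2_comp (f g : V1 * V2 -> V1 * V2) :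
  bounded_linear2 f -> bounded_linear2 g -> bounded_linear2 (fun v => f (g v)).
Proof.
move=> [fl [M fM]] [gl [N gN]]; split; first by move=> a x y; rewrite gl fl.
exists (`|M| * `|N|) => v; apply: (le_trans (fM _)); rewrite -mulrA.
apply: (@le_trans _ _ (`|M| * norm2 (g v))).
  by apply: ler_wpM2r; [exact: norm2_ge0 | exact: ler_norm].
apply: ler_wpM2l; first exact: normr_ge0.
apply: (le_trans (gN v)); apply: ler_wpM2r; [exact: norm2_ge0 | exact: ler_norm].
Qed.

End Norm2.

Section RightLimits.
Variable R : realType.

Lemma near_at_right0P (P : R -> Prop) :
  (\forall t \near 0^'+, P t) <-> exists2 d : R, 0 < d & forall t, 0 < t < d -> P t.
Proof.
rewrite near_withinE; split.
- move=> /nbhs_ballP[e e0 eP]; exists e => // t /andP[t0 te]; apply: eP => //.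
  by rewrite /ball /= sub0r normrN gtr0_norm.
- move=> [d d0 dP]; apply/nbhs_ballP; exists d => // t.
  rewrite /ball /= sub0r normrN => td t0; apply: dP.
  by rewrite t0 -(gtr0_norm t0).
Qed.

Lemma cvg_at_right0P (V : normedModType R) (f : R -> V) l : f @ 0^'+ --> l <->
  forall e, 0 < e -> exists2 d, 0 < d & forall t, 0 < t < d -> `|f t - l| <= e.
Proof.
rewrite cvgrPdistC_le; split=> fl e e0; first exact/near_at_right0P/fl.
exact/near_at_right0P/fl.
Qed.

Lemma cvg_at_right0_pos (u : nat -> R) :
  u @ \oo --> 0 -> (forall n, 0 < u n) -> u @ \oo --> 0^'+.
Proof.
move=> u0 upos P uP; change (\forall n \near \oo, P (u n)).
have : \forall n \near \oo, 0 < u n -> P (u n) := u0 _ uP.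
by apply: filterS => n /(_ (upos n)).
Qed.

Lemma cvg_divn_at_right0 (tau : R) : 0 < tau -> tau / n.+1%:R @[n --> \oo] --> 0^'+.
Proof.
move=> tau0; apply: cvg_at_right0_pos => [|n]; last by rewrite divr_gt0.
by rewrite -(mulr0 tau); apply: cvgM; [exact: cvg_cst | exact: cvg_harmonic].
Qed.


End RightLimits.

Section C0Semigroup.
Variables (R : realType) (V : normedModType R) (T : R -> V -> V).
Hypothesis hT : C0_semigroup T.

Lemma C0_semigroup_lin t : 0 <= t -> is_linear (T t).
Proof. by case: hT => lin _ _ _ _; exact: lin. Qed.

Lemma C0_semigroup0 x : T 0 x = x.
Proof. by case: hT => _ T0 _ _ _; exact: T0. Qed.

Lemma C0_semigroupD s t x : 0 <= s -> 0 <= t -> T (s + t) x = T s (T t x).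
Proof. by case: hT => _ _ TD _ _; exact: TD. Qed.

Lemma C0_semigroup_bound t : 0 <= t ->
  exists2 M : R, 0 < M & forall y, `|T t y| <= M * `|y|.
Proof.
case: hT => _ _ _ Tb _ t0; have [M TM] := Tb t t0.
exists (`|M| + 1); first by rewrite ltr_pwDr // normr_ge0.
move=> y; apply: (le_trans (TM y)); apply: ler_wpM2r; first exact: normr_ge0.
by rewrite (le_trans (ler_norm M)) // lerDl.
Qed.

Lemma C0_semigroup_continuous t : 0 <= t -> continuous (T t).
Proof.
move=> t0; apply: is_linear_continuous; first exact: C0_semigroup_lin.
by have [M _ TM] := C0_semigroup_bound t0; exists M.
Qed.

Lemma C0_semigroup_cvg0 x : T t x @[t --> 0^'+] --> x.
Proof. by case: hT. Qed.

Lemma C0_semigroup_left_cvg (t K : R) x s : 0 < K ->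
  (forall r u, 0 <= r <= t -> `|T r u| <= K * `|u|) -> 0 < s <= t ->
  forall e, 0 < e -> exists2 d, 0 < d &
    forall r, s - d < r < s -> 0 <= r -> `|T s x - T r x| <= e.
Proof.
move=> K0 TK /andP[s0 st] e e0.
have /cvg_at_right0P /(_ (e / K)) [|d d0 dx] := C0_semigroup_cvg0 (x := x).
  by rewrite divr_gt0.
exists d => // r /andP[sdr rs] r0.
have sr0 : 0 < s - r by rewrite subr_gt0.
have -> : T s x - T r x = T r (T (s - r) x - x).
  rewrite (is_linearB (C0_semigroup_lin r0)) -C0_semigroupD ?subr_ge0 ?(ltW rs) //.
  by rewrite subrKC.
apply: (le_trans (TK _ _ _)); first by rewrite r0 (le_trans (ltW rs)).
by rewrite -ler_pdivlMl // mulrC dx // sr0 ltrBlDl -ltrBlDr.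
Qed.

Section Generator.
Variables (D : set V) (G : V -> V).
Hypothesis hG : generates T D G.
Local Notation dq x := (fun t => t^-1 *: (T t x - x)).

Lemma generates_cvg x : D x -> dq x @ 0^'+ --> G x.
Proof. exact: (hG x).2. Qed.

Lemma generates_domP x l : dq x @ 0^'+ --> l -> D x /\ G x = l.
Proof.
move=> xl; have Dx : D x by apply/(hG x).1; exact: cvgP xl.
by split=> //; exact: cvg_unique (generates_cvg Dx) xl.
Qed.

Lemma generates_linear a x y : D x -> D y ->
  D (a *: x + y) /\ G (a *: x + y) = a *: G x + G y.
Proof.
move=> Dx Dy; apply: generates_domP.
apply: cvg_trans (near_eq_cvg _) (cvgD (cvgZ (cvg_cst a) (generates_cvg Dx))
  (generates_cvg Dy)).
near=> t; have t0 : 0 <= t by apply: ltW; near: t; exact: nbhs_right_gt.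
rewrite /= (C0_semigroup_lin t0) opprD addrACA -scalerBr.
by rewrite [RHS]scalerDr !scalerA fctE /= scalerA mulrC.
Unshelve. all: by end_near. Qed.

Lemma generates_dom0 : D 0 /\ G 0 = 0.
Proof.
apply: generates_domP; apply: cvg_trans (near_eq_cvg _) (cvg_cst 0).
near=> t; have t0 : 0 <= t by apply: ltW; near: t; exact: nbhs_right_gt.
by rewrite /= (is_linear0 (C0_semigroup_lin t0)) subrr scaler0.
Unshelve. all: by end_near. Qed.

Lemma generates_domZ a x : D x -> D (a *: x) /\ G (a *: x) = a *: G x.
Proof.
move=> Dx; have [D0 G0] := generates_dom0.
by have := generates_linear a Dx D0; rewrite G0 !addr0.
Qed.

Lemma generates_domB x y : D x -> D y -> D (x - y) /\ G (x - y) = G x - G y.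
Proof.
by move=> Dx Dy; have := generates_linear (-1) Dy Dx; rewrite !scaleN1r !(addrC (- _)).
Qed.

Lemma generates_oppB (A : V -> V) x y : G = (fun z => - A z) -> D x -> D y ->
  D (x - y) /\ A (x - y) = A x - A y.
Proof.
move=> GA Dx Dy; have [Dxy] := generates_domB Dx Dy; rewrite GA /= => Gxy.
by split=> //; apply: oppr_inj; rewrite Gxy opprK opprB addrC.
Qed.

Lemma generates_comm s x : 0 <= s -> D x -> D (T s x) /\ G (T s x) = T s (G x).
Proof.
move=> s0 Dx; apply: generates_domP.
apply: cvg_trans (near_eq_cvg _)
  (continuous_cvg _ (@C0_semigroup_continuous s s0 (G x)) (generates_cvg Dx)).
near=> t; have t0 : 0 <= t by apply: ltW; near: t; exact: nbhs_right_gt.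
have Ts := C0_semigroup_lin s0.
rewrite /= (is_linearZ Ts) (is_linearB Ts) -C0_semigroupD // -C0_semigroupD //.
by rewrite (addrC s).
Unshelve. all: by end_near. Qed.

Lemma generates_dense : (forall v, exists2 z, D z & G z = v) ->
  forall v e, 0 < e -> exists2 u, D u & `|v - u| <= e.
Proof.
move=> G_onto v e e0; have [z Dz <-] := G_onto v.
have /cvg_at_right0P /(_ e e0) [d d0 zd] := generates_cvg Dz.
have t0 : 0 < d / 2 by rewrite divr_gt0.
exists ((d / 2)^-1 *: (T (d / 2) z - z)); last first.
  by rewrite distrC zd // t0 ltr_pdivrMr // ltr_pMr // ltr1n.
have [DTz _] := generates_comm (ltW t0) Dz.
by have [Dd _] := generates_domB DTz Dz; have [] := generates_domZ (d / 2)^-1 Dd.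
Qed.

End Generator.
End C0Semigroup.

Section ProductConvergence.
Variables (R : realType) (V1 V2 : normedModType R) (T : Type) (F : set_system T).

Lemma cvg_fst_of (u : T -> V1 * V2) (l : V1 * V2) :
  u @ F --> l -> (fun x => (u x).1) @ F --> l.1.
Proof. by move=> ul; apply: cvg_comp ul _; exact: cvg_fst. Qed.

Lemma cvg_snd_of (u : T -> V1 * V2) (l : V1 * V2) :
  u @ F --> l -> (fun x => (u x).2) @ F --> l.2.
Proof. by move=> ul; apply: cvg_comp ul _; exact: cvg_snd. Qed.

End ProductConvergence.

Section RiemannSums.
Variable R : realType.

Definition riemann_sum (V : normedModType R) (f : R -> V) (a b : R) (n : nat) : V :=
  ((b - a) / n.+1%:R) *: \sum_(i < n.+1) f (a + i%:R * (b - a) / n.+1%:R).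

Lemma riemann_node_in (a b : R) n (i : 'I_n.+1) :
  a <= b -> a <= a + i%:R * (b - a) / n.+1%:R <= b.
Proof.
move=> ab; have ba : 0 <= b - a by rewrite subr_ge0.
rewrite lerDl mulr_ge0 ?divr_ge0 ?mulr_ge0 ?ler0n //= -lerBrDl.
rewrite ler_pdivrMr ?ltr0n // mulrC ler_wpM2l // ler_nat ltnW //.
Qed.

(* Unqualified, [Rint] would denote mathcomp's predicate of integral numbers. *)
Lemma Rint_riemann_sum_cvg (V : normedModType R) (f : R -> V) a b l :
  riemann_sum f a b @ \oo --> l -> Defs.Rint f a b = l.
Proof. exact: cvg_lim. Qed.

Lemma Rint_fst (V1 V2 : normedModType R) (f : R -> V1 * V2) a b (l : V1 * V2) :
  riemann_sum f a b @ \oo --> l -> Defs.Rint (fun s => (f s).1) a b = l.1.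
Proof.
move=> /cvg_fst_of fl; apply: Rint_riemann_sum_cvg.
suff -> : riemann_sum (fun s => (f s).1) a b = (fun n => (riemann_sum f a b n).1) by [].
apply/funext => n; rewrite /riemann_sum.
by rewrite -(big_morph fst (id1 := 0) (op1 := +%R) (id2 := 0) (op2 := +%R)).
Qed.

Lemma Rint_snd (V1 V2 : normedModType R) (f : R -> V1 * V2) a b (l : V1 * V2) :
  riemann_sum f a b @ \oo --> l -> Defs.Rint (fun s => (f s).2) a b = l.2.
Proof.
move=> /cvg_snd_of fl; apply: Rint_riemann_sum_cvg.
suff -> : riemann_sum (fun s => (f s).2) a b = (fun n => (riemann_sum f a b n).2) by [].
apply/funext => n; rewrite /riemann_sum.
by rewrite -(big_morph snd (id1 := 0) (op1 := +%R) (id2 := 0) (op2 := +%R)).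
Qed.

End RiemannSums.

Section SemigroupRiemannSums.
Variables (R : realType) (V : normedModType R) (T : R -> V -> V) (tau K : R).
Hypotheses (hT : C0_semigroup T) (tau0 : 0 < tau) (K0 : 0 <= K)
  (TK : forall s u, 0 <= s <= tau -> `|T s u| <= K * `|u|).

Lemma norm_riemann_sum_semigroup w n :
  `|riemann_sum (fun s => T s w) 0 tau n| <= tau * K * `|w|.
Proof.
have h0 : 0 <= (tau - 0) / n.+1%:R by rewrite subr0 divr_ge0 ?ltW ?ltr0n.
rewrite /riemann_sum normrZ ger0_norm //; apply: le_trans (ler_wpM2l h0 (ler_norm_sum _ _ _)) _.
apply: le_trans (ler_wpM2l h0 (ler_sum _ (fun i _ => TK w (riemann_node_in i (ltW tau0))))) _.
rewrite sumr_const card_ord subr0 -[K * _ *+ _]mulr_natr mulrCA divfK ?pnatr_eq0 //.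
by rewrite mulrC mulrA.
Qed.

Lemma riemann_sum_semigroup_telescope y w n (h := tau / n.+1%:R) :
  (y - T tau y) - riemann_sum (fun s => T s w) 0 tau n =
  - riemann_sum (fun s => T s (h^-1 *: (T h y - y) + w)) 0 tau n.
Proof.
have h0 : 0 < h by rewrite divr_gt0 ?ltr0n.
have node i : 0 + i%:R * tau / n.+1%:R = i%:R * h by rewrite add0r mulrA.
have nodeS i : i.+1%:R * h = i%:R * h + h by rewrite -natr1 mulrDl mul1r.
have step i : T (i%:R * h) (h^-1 *: (T h y - y)) =
    h^-1 *: (T (i.+1%:R * h) y - T (i%:R * h) y).
  have ih0 : 0 <= i%:R * h by rewrite mulr_ge0 ?ler0n ?ltW.
  rewrite (is_linearZ (C0_semigroup_lin hT ih0)) (is_linearB (C0_semigroup_lin hT ih0)).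
  by rewrite nodeS -(C0_semigroupD hT) ?(ltW h0).
have tel : T tau y - y = \sum_(i < n.+1) (T (i.+1%:R * h) y - T (i%:R * h) y).
  rewrite -(big_mkord xpredT (fun i => T (i.+1%:R * h) y - T (i%:R * h) y)).
  have Nh : n.+1%:R * h = tau by rewrite /h mulrC divfK ?pnatr_eq0.
  by rewrite telescope_sumr // mul0r (C0_semigroup0 hT) Nh.
suff -> : riemann_sum (fun s => T s (h^-1 *: (T h y - y) + w)) 0 tau n =
    (T tau y - y) + riemann_sum (fun s => T s w) 0 tau n by rewrite opprD opprB.
rewrite /riemann_sum subr0 -/h tel !scaler_sumr -big_split; apply: eq_bigr => i _ /=.
have ih0 : 0 <= i%:R * h by rewrite mulr_ge0 ?ler0n ?ltW.
rewrite node (is_linearD (C0_semigroup_lin hT ih0)) step scalerDr scalerA.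
by rewrite mulfV ?gt_eqF // scale1r.
Qed.

Variables (D : set V) (A : V -> V).
Hypothesis hA : generates T D (fun x => - A x).

Lemma riemann_sum_generator_cvg y : D y ->
  riemann_sum (fun s => T s (A y)) 0 tau @ \oo --> y - T tau y.
Proof.
move=> Dy; pose Q n := (tau / n.+1%:R)^-1 *: (T (tau / n.+1%:R) y - y) + A y.
have Q0 : Q @ \oo --> 0.
  rewrite -(addNr (A y)); apply: cvgD; last exact: cvg_cst.
  exact: cvg_comp (cvg_divn_at_right0 tau0) (generates_cvg hA Dy).
apply/cvgrPdist_le => e e0; have tK1 : 0 < tau * K + 1 by have := mulr_ge0 (ltW tau0) K0; lra.
near=> n; rewrite riemann_sum_semigroup_telescope normrN.
apply: le_trans (norm_riemann_sum_semigroup _ _) _.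
apply: (@le_trans _ _ ((tau * K + 1) * `|Q n|)).
  by rewrite ler_wpM2r ?normr_ge0 // lerDl.
rewrite -ler_pdivlMl // mulrC; near: n; apply: cvgr0_norm_le Q0 _ _.
by rewrite divr_gt0.
Unshelve. all: by end_near. Qed.

Lemma semigroup_lipschitz y : D y -> `|y - T tau y| <= tau * K * `|A y|.
Proof.
move=> Dy; apply: ler_cvg_to (cvg_norm (riemann_sum_generator_cvg Dy)) (cvg_cst _) _.
by near=> n; exact: norm_riemann_sum_semigroup.
Unshelve. all: by end_near. Qed.

End SemigroupRiemannSums.

(* The library has no [completeNormedModType] instance on [V1 * V2], so Banach-Steinhaus
   enters as this property, proved for such products in [prod_uniform_boundedness]. *)
Definition uniform_boundedness (R : realType) (V : normedModType R) :=
  forall F : set (V -> V), (forall f, F f -> bounded_fun_norm f /\ linear f) ->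
    pointwise_bounded F -> uniform_bounded F.

Section UniformBoundedness.
Variable R : realType.

Lemma uniform_bounded_comp (U : completeNormedModType R) (W : normedModType R)
    (i : U -> W) (F : set (W -> W)) :
  is_linear i -> (forall x, `|i x| <= `|x|) ->
  (forall f, F f -> bounded_fun_norm f /\ linear f) -> pointwise_bounded F ->
  uniform_bounded [set f \o i | f in F].
Proof.
move=> i_lin i_le Fbl Fpb; apply: Banach_Steinhauss => [_ [f Ff <-]|x].
  have [fb f_lin] := Fbl f Ff; split=> [r | a x y /=]; last by rewrite i_lin f_lin.
  by have [M fM] := fb r; exists M => x xr; apply: fM; exact: le_trans (i_le x) xr.
by have [M FM] := Fpb (i x); exists M => _ [f Ff <-]; exact: FM.
Qed.

Lemma prod_uniform_boundedness (V1 V2 : completeNormedModType R) :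
  uniform_boundedness (V1 * V2)%type.
Proof.
move=> F Fbl Fpb r.
have i1_lin : is_linear (fun x : V1 => (x, 0 : V2)).
  by move=> a x y; rewrite -[RHS]/(a *: x + y, a *: 0 + 0) scaler0 addr0.
have i2_lin : is_linear (fun y : V2 => (0 : V1, y)).
  by move=> a x y; rewrite -[RHS]/(a *: 0 + 0, a *: x + y) scaler0 addr0.
have i1_le (x : V1) : `|(x, 0 : V2)| <= `|x|.
  by rewrite prod_normE /= normr0 ge_max lexx normr_ge0.
have i2_le (y : V2) : `|(0 : V1, y)| <= `|y|.
  by rewrite prod_normE /= normr0 ge_max lexx normr_ge0.
have [M1 FM1] := uniform_bounded_comp i1_lin i1_le Fbl Fpb r.
have [M2 FM2] := uniform_bounded_comp i2_lin i2_le Fbl Fpb r.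
exists (M1 + M2) => f Ff v vr; have f_lin : is_linear f by case: (Fbl f Ff).
have -> : v = (v.1, 0) + (0, v.2).
  by rewrite -[RHS]/(v.1 + 0, 0 + v.2) addr0 add0r -surjective_pairing.
rewrite (is_linearD f_lin); apply: (le_trans (ler_normD _ _)); apply: lerD.
  apply: (FM1 (fun x => f (x, 0))); first by exists f.
  by apply: le_trans vr; rewrite [X in _ <= X]prod_normE le_max lexx.
apply: (FM2 (fun y => f (0, y))); first by exists f.
by apply: le_trans vr; rewrite [X in _ <= X]prod_normE le_max lexx orbT.
Qed.

End UniformBoundedness.


Section LocalBound.
Variables (R : realType) (V : normedModType R) (T : R -> V -> V).
Hypotheses (hT : C0_semigroup T) (ubp : uniform_boundedness V).

Lemma C0_semigroup_pointwise_bounded (t : nat -> R) :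
  (forall n, 0 <= t n <= n.+1%:R^-1) -> forall w, exists M, forall n, `|T (t n) w| <= M.
Proof.
move=> t_in w; have /cvg_at_right0P /(_ 1 ltr01) [d d0 dw] := C0_semigroup_cvg0 hT (x := w).
have [N _ tN] := near_infty_natSinv_lt (PosNum d0).
exists (`|w| + 1 + \sum_(i < N) `|T (t i) w|) => n.
have s0 : 0 <= \sum_(i < N) `|T (t i) w| by apply: sumr_ge0 => i _; exact: normr_ge0.
have [nN | nN] := leqP N n; last first.
  rewrite ler_wpDl ?addr_ge0 // (bigD1 (Ordinal nN)) //= lerDl.
  by apply: sumr_ge0 => i _; exact: normr_ge0.
have /andP[tn0 tn1] := t_in n; have [t0 | tn | <-] := ltgtP 0 (t n).
- have : `|T (t n) w - w| <= 1 by apply: dw; rewrite t0 (le_lt_trans tn1) // tN.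
  have := ler_normD (T (t n) w - w) w; rewrite subrK; lra.
- by move: tn0; rewrite leNgt tn.
- by rewrite (C0_semigroup0 hT) -addrA lerDl addr_ge0.
Qed.

Lemma C0_semigroup_bounded_near0 :
  exists2 d : R, 0 < d & exists M, forall t u, 0 <= t <= d -> `|T t u| <= M * `|u|.
Proof.
apply: contrapT => unbounded.
have bad n : exists t, 0 <= t <= n.+1%:R^-1 /\ exists u, n.+1%:R * `|u| < `|T t u|.
  apply: contrapT => nbad; apply: unbounded.
  exists n.+1%:R^-1; first by rewrite invr_gt0 ltr0n.
  exists n.+1%:R => t u tn; rewrite leNgt; apply/negP => Tu.
  by apply: nbad; exists t; split=> //; exists u.
have [t tP] := choice bad; have t_in n : 0 <= t n <= n.+1%:R^-1 by case: (tP n).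
have t0 n : 0 <= t n by case/andP: (t_in n).
pose F := [set T (t n) | n in [set: nat]].
have Fbl f : F f -> bounded_fun_norm f /\ linear f.
  move=> [n _ <-]; split; last exact: C0_semigroup_lin.
  have [M M0 TM] := C0_semigroup_bound hT (t0 n).
  move=> r; exists (M * r) => x xr; apply: (le_trans (TM x)); by rewrite ler_pM2l.
have Fpb : pointwise_bounded F.
  move=> w; have [M tM] := C0_semigroup_pointwise_bounded t_in w.
  by exists M => _ [n _ <-]; exact: tM.
have [M FM] := ubp Fbl Fpb 1.
have TM n u : `|T (t n) u| <= M * `|u|.
  apply: (is_linear_unit_ball_bound (C0_semigroup_lin hT (t0 n))) => x x1.
  by apply: FM x1; exists n.
have [_ [u Tu]] := tP (Num.truncn M).
have := TM (Num.truncn M) u; have := truncnS_gt M; have := normr_ge0 u; nra.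
Qed.

Lemma C0_semigroup_bounded_on tau :
  exists2 K : R, 0 < K & forall t u, 0 <= t <= tau -> `|T t u| <= K * `|u|.
Proof.
have [d d0 [M TM]] := C0_semigroup_bounded_near0.
pose M' := Num.max M 1; have M'1 : 1 <= M' by rewrite le_max lexx orbT.
have TM' t u : 0 <= t <= d -> `|T t u| <= M' * `|u|.
  by move=> td; apply: le_trans (TM t u td) _; rewrite ler_wpM2r ?le_max ?lexx.
have iter k t u : 0 <= t <= k.+1%:R * d -> `|T t u| <= M' ^+ k.+1 * `|u|.
  elim: k t u => [|k IH] t u /andP[t0 tk]; first by rewrite expr1 TM' // t0 -(mul1r d).
  have [td | dt] := lerP t d.
    apply: le_trans (TM' t u _) _; first by rewrite t0.
    by rewrite ler_wpM2r // exprS ler_peMr ?exprn_ege1 // (le_trans ler01).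
  have -> : T t u = T d (T (t - d) u).
    by rewrite -(C0_semigroupD hT) ?subr_ge0 ?ltW // addrC subrK.
  apply: le_trans (TM' _ _ _) _; first by rewrite (ltW d0) lexx.
  rewrite exprS -mulrA ler_wpM2l ?(le_trans ler01) // IH // subr_ge0 (ltW dt).
  by rewrite lerBlDr -[X in _ + X]mul1r -mulrDl natr1.
exists (M' ^+ (Num.truncn (tau / d)).+1); first by rewrite exprn_gt0 // (lt_le_trans ltr01).
move=> t u /andP[t0 ttau]; apply: iter; rewrite t0 (le_trans ttau) //.
by rewrite -ler_pdivrMr // ltW // truncnS_gt.
Qed.

End LocalBound.

Section Dini.
Variables (R : realType) (F : R -> R) (t : R).
Hypotheses (t0 : 0 <= t) (F0 : F 0 <= 0)
  (F_left : forall s, 0 < s <= t -> forall e, 0 < e -> exists2 d, 0 < d &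
     forall r, s - d < r < s -> 0 <= r -> F s <= F r + e)
  (F_right : forall s, 0 <= s < t -> forall e, 0 < e -> exists2 d, 0 < d &
     forall h, 0 < h < d -> s + h <= t -> F (s + h) <= F s + e * h).

Let dini_left_step eps s : 0 < eps -> 0 < s <= t ->
  (forall r, 0 <= r < s -> F r <= eps * r) -> F s <= eps * s.
Proof.
move=> eps0 st below; apply/ler_addgt0Pr => e e0.
have [d d0 dF] := F_left st e0; case/andP: st => s0 _.
pose r := s - Num.min d s / 2.
have m0 : 0 < Num.min d s by rewrite lt_min d0 s0.
have md : Num.min d s <= d by rewrite ge_min lexx.
have ms : Num.min d s <= s by rewrite ge_min lexx orbT.
have r0 : 0 <= r by rewrite /r; lra.
have rs : r < s by rewrite /r; lra.
have := dF r; rewrite rs andbT => /(_ _ r0) Fsr.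
have Fr : F r <= eps * r by apply: below; rewrite r0 rs.
have : eps * r <= eps * s by rewrite ler_pM2l // ltW.
have : s - d < r by rewrite /r; lra.
move=> /Fsr; lra.
Qed.

Let dini_right_step eps s : 0 < eps -> 0 <= s < t ->
  (forall r, 0 <= r <= s -> F r <= eps * r) ->
  exists2 h, 0 < h & s + h <= t /\ forall r, 0 <= r <= s + h -> F r <= eps * r.
Proof.
move=> eps0 st upto_s; have [d d0 dF] := F_right st eps0; case/andP: st => s0 st.
pose h := Num.min (d / 2) (t - s).
have h0 : 0 < h by rewrite lt_min divr_gt0 // subr_gt0.
have hd : h <= d / 2 by rewrite ge_min lexx.
have hts : h <= t - s by rewrite ge_min lexx orbT.
exists h => //; split=> [|r /andP[r0 rsh]]; first by lra.
have [rs | sr] := lerP r s; first by apply: upto_s; rewrite r0.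
have := dF (r - s); rewrite subr_gt0 sr subrKC => Fr.
have Fs : F s <= eps * s by apply: upto_s; rewrite s0 lexx.
have : F r <= F s + eps * (r - s) by apply: Fr; lra.
rewrite mulrBr; lra.
Qed.

Lemma dini_le_mul eps : 0 < eps -> F t <= eps * t.
Proof.
move=> eps0.
pose A := [set s | 0 <= s <= t /\ forall r, 0 <= r <= s -> F r <= eps * r].
have A0 : A 0.
  split=> [|r /andP[r0 r0']]; first by rewrite lexx t0.
  have -> : r = 0 by apply/eqP; rewrite eq_le r0' r0.
  by rewrite mulr0.
have supA : has_sup A by split; [exists 0 | exists t => s [/andP[_ ->]]].
set s := sup A.
have s0 : 0 <= s by exact: sup_upper_bound.
have st : s <= t by apply: ge_sup; [exists 0 | move=> r [/andP[_ ->]]].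
have below r : 0 <= r < s -> F r <= eps * r.
  move=> /andP[r0 rs]; have [a [_ Aa] ra] := sup_gt (ex_intro _ 0 A0) rs.
  by apply: Aa; rewrite r0 ltW.
have upto_s r : 0 <= r <= s -> F r <= eps * r.
  move=> /andP[r0]; rewrite le_eqVlt => /predU1P[-> | rs]; last by rewrite below ?r0.
  have [s_gt0 | s_lt0 | <-] := ltgtP 0 s; last by rewrite mulr0.
  - by apply: dini_left_step eps0 _ below; rewrite s_gt0 st.
  - by have := lt_le_trans s_lt0 s0; rewrite ltxx.
suff <- : s = t by apply: upto_s; rewrite s0 lexx.
apply/eqP; rewrite eq_le st leNgt; apply/negP => slt.
have [|h h0 [sht Ash]] := dini_right_step eps0 _ upto_s; first by rewrite s0 slt.
have : A (s + h) by split=> //; rewrite sht addr_ge0 // ltW.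
by move=> /(sup_upper_bound supA); rewrite -/s; lra.
Qed.

Lemma dini_le0 : F t <= 0.
Proof.
apply/ler_addgt0Pr => e e0; rewrite add0r.
have [t_gt0 | t_eq0] := ltP 0 t.
  by have := dini_le_mul (divr_gt0 e0 t_gt0); rewrite divfK ?gt_eqF.
have -> : t = 0 by apply/eqP; rewrite eq_le t_eq0 t0.
exact: le_trans F0 (ltW e0).
Qed.

End Dini.


Lemma expRN_le1 (R : realType) (x : R) : 0 <= x -> expR (- x) <= 1.
Proof. by move=> x0; rewrite -expR0 ler_expR oppr_le0. Qed.

Section BoundedPerturbation.
Variables (R : realType) (V : normedModType R) (D : set V) (A B : V -> V)
  (E S : R -> V -> V) (b : R).
Hypotheses (E_contr : forall t x, 0 <= t -> `|E t x| <= `|x|)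
  (gE : generates E D (fun x => - A x))
  (b0 : 0 <= b) (B_bound : forall x, `|B x| <= b * `|x|)
  (hS : C0_semigroup S) (gS : generates S D (fun x => - (A x - B x))).

Lemma perturbed_right_growth y : D y -> forall e, 0 < e -> exists2 d, 0 < d &
  forall h, 0 < h < d -> `|S h y| <= (1 + h * b) * `|y| + e * h.
Proof.
move=> Dy e e0; have e2 : 0 < e / 2 by rewrite divr_gt0.
have /cvg_at_right0P /(_ _ e2) [dS dS0 rS] := generates_cvg gS Dy.
have /cvg_at_right0P /(_ _ e2) [dE dE0 rE] := generates_cvg gE Dy.
exists (Num.min dS dE) => [|h /andP[h0]]; first by rewrite lt_min dS0 dE0.
rewrite lt_min => /andP[hdS hdE]; rewrite opprK in rS; rewrite opprK in rE.
have := rS h; have := rE h; rewrite h0 hdS hdE => /(_ isT) rEh /(_ isT) rSh.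
set qS := h^-1 *: (S h y - y) in rSh; set qE := h^-1 *: (E h y - y) in rEh.
have qdiff : h *: (qS - qE) = S h y - E h y.
  by rewrite -scalerBr scalerA mulfV ?gt_eqF // scale1r opprB subrKA.
have -> : S h y = E h y + h *: ((qS + (A y - B y)) - (qE + A y) + B y).
  by rewrite opprD addrACA [A y - B y - A y]addrAC subrr add0r subrK qdiff subrKC.
apply: le_trans (ler_normD _ _) _; rewrite normrZ gtr0_norm //.
have : `|qS + (A y - B y) - (qE + A y) + B y| <= e + b * `|y|.
  apply: le_trans (ler_normD _ _) _; apply: lerD (B_bound y).
  by apply: le_trans (ler_normB _ _) _; rewrite [e]splitr; exact: lerD rSh rEh.
move=> /(ler_wpM2l (ltW h0)); have := E_contr y (ltW h0); rewrite mulrDr; lra.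
Qed.

Hypothesis ubp : uniform_boundedness V.

Let F x s := expR (- (s * b)) * `|S s x| - `|x|.

Let F_left x t : 0 <= t -> forall s, 0 < s <= t -> forall e, 0 < e -> exists2 d, 0 < d &
  forall r, s - d < r < s -> 0 <= r -> F x s <= F x r + e.
Proof.
move=> t0 s st e e0; have [K K0 SK] := C0_semigroup_bounded_on hS ubp t.
have [d d0 dS] := C0_semigroup_left_cvg hS x K0 SK st e0.
exists d => // r rs r0; have Ssr := dS r rs r0.
case/andP: rs => _ rs; case/andP: st => s0 _.
have es1 : expR (- (s * b)) <= 1 by rewrite expRN_le1 // mulr_ge0 // ltW.
have esr : expR (- (s * b)) <= expR (- (r * b)).
  by rewrite ler_expR lerN2 ler_wpM2r // ltW.
have Ss : `|S s x| <= `|S r x| + `|S s x - S r x|.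
  by have := ler_normD (S r x) (S s x - S r x); rewrite subrKC.
have := ler_wpM2l (expR_ge0 (- (s * b))) Ss; rewrite mulrDr /F.
have := ler_wpM2r (normr_ge0 (S r x)) esr.
have := ler_wpM2r (normr_ge0 (S s x - S r x)) es1.
have := expR_ge0 (- (s * b)); lra.
Qed.

Let F_right x t : D x -> forall s, 0 <= s < t -> forall e, 0 < e -> exists2 d, 0 < d &
  forall h, 0 < h < d -> s + h <= t -> F x (s + h) <= F x s + e * h.
Proof.
move=> Dx s /andP[s0 _] e e0; have [DSx _] := generates_comm hS gS s0 Dx.
have [d d0 growth] := perturbed_right_growth DSx e0.
exists d => // h hd _; have /andP[h0 _] := hd; have := growth h hd.
rewrite /F (addrC s h) (C0_semigroupD hS) ?(ltW h0) // (mulrDl h s b) opprD expRD.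
set y := S s x; set es := expR (- (s * b)); set eh := expR (- (h * b)).
have hb0 : 0 <= h * b by rewrite mulr_ge0 // ltW.
have eh1 : eh * (1 + h * b) <= 1.
  by rewrite /eh expRN ler_pdivrMl ?expR_gt0 // mulr1 expR_ge1Dx.
have es1 : es <= 1 by rewrite expRN_le1 // mulr_ge0.
have eh1' : eh <= 1 by rewrite expRN_le1.
have es0 : 0 <= es := expR_ge0 _; have eh0 : 0 <= eh := expR_ge0 _.
move=> /(ler_wpM2l (mulr_ge0 es0 eh0)); rewrite mulrDr.
have := ler_wpM2l es0 (ler_wpM2r (normr_ge0 y) eh1).
have := ler_wpM2r (mulr_ge0 (ltW e0) (ltW h0)) (ler_wpM2l es0 eh1').
have := ler_wpM2r (mulr_ge0 (ltW e0) (ltW h0)) es1.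
rewrite !mulrA !mulr1; lra.
Qed.

Lemma perturbed_growth_dom x t : D x -> 0 <= t -> `|S t x| <= expR (t * b) * `|x|.
Proof.
move=> Dx t0; have F0 : F x 0 <= 0 by rewrite /F mul0r oppr0 expR0 mul1r (C0_semigroup0 hS) subrr.
have := dini_le0 t0 F0 (F_left x t0) (F_right (t := t) Dx).
by rewrite /F subr_le0 expRN mulrC ler_pdivrMr ?expR_gt0 // mulrC.
Qed.

Hypothesis D_dense : forall v e, 0 < e -> exists2 u, D u & `|v - u| <= e.

Lemma perturbed_growth v t : 0 <= t -> `|S t v| <= expR (t * b) * `|v|.
Proof.
move=> t0; have [M _ SM] := C0_semigroup_bound hS t0.
have SMb : exists M, forall u, `|S t u| <= M * `|u| by exists M.
have Sdom u : D u -> `|S t u| <= expR (t * b) * `|u| by move=> Du; exact: perturbed_growth_dom.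
exact: (is_linear_bound_dense (C0_semigroup_lin hS t0) SMb D_dense (expR_ge0 _) Sdom v).
Qed.

Lemma perturbed_lipschitz y tau : 0 < tau -> D y ->
  `|y - S tau y| <= tau * expR (tau * b) * `|A y - B y|.
Proof.
move=> tau0 Dy; have SK s u : 0 <= s <= tau -> `|S s u| <= expR (tau * b) * `|u|.
  move=> /andP[s0 st]; apply: le_trans (perturbed_growth u s0) _.
  by rewrite ler_wpM2r ?normr_ge0 // ler_expR ler_wpM2r.
exact: (semigroup_lipschitz hS tau0 (expR_ge0 _) SK gS Dy).
Qed.

End BoundedPerturbation.

Section InverseEstimates.
Variables (R : realType) (V : normedModType R) (D : set V) (A Ainv : V -> V)
  (E : R -> V -> V).
Hypotheses (hE : C0_semigroup E) (E_contr : forall t x, 0 <= t -> `|E t x| <= `|x|)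
  (gE : generates E D (fun x => - A x))
  (Ainv_dom : forall v, D (Ainv v)) (A_Ainv : forall v, A (Ainv v) = v)
  (Ainv_A : forall v, D v -> Ainv (A v) = v) (Ainv_lin : is_linear Ainv).

Lemma generator_dom_dense v e : 0 < e -> exists2 u, D u & `|v - u| <= e.
Proof.
have A_onto w : exists2 z, D z & - A z = w by exists (Ainv (- w)); rewrite ?A_Ainv ?opprK.
exact: (generates_dense hE gE A_onto v).
Qed.

Lemma Ainv_semigroup_comm t w : 0 <= t -> Ainv (E t w) = E t (Ainv w).
Proof.
move=> t0; have [DE AE] := generates_comm hE gE t0 (Ainv_dom w).
rewrite A_Ainv (is_linearN (C0_semigroup_lin hE t0)) in AE.
by rewrite -[in LHS](oppr_inj AE) Ainv_A.
Qed.

Lemma norm_semigroup_sub_Ainv tau v : 0 < tau -> `|Ainv v - E tau (Ainv v)| <= tau * `|v|.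
Proof.
move=> tau0; have E1 s u : 0 <= s <= tau -> `|E s u| <= 1 * `|u|.
  by move=> /andP[s0 _]; rewrite mul1r E_contr.
by have := semigroup_lipschitz hE tau0 ler01 E1 gE (Ainv_dom v); rewrite A_Ainv mulr1.
Qed.

Lemma norm_Ainv_semigroup_sub tau v : 0 < tau -> `|Ainv (v - E tau v)| <= tau * `|v|.
Proof.
move=> tau0; rewrite (is_linearB Ainv_lin) (Ainv_semigroup_comm v (ltW tau0)).
exact: norm_semigroup_sub_Ainv v tau0.
Qed.

Variables (B : V -> V) (S : R -> V -> V) (b c : R).
Hypotheses (b0 : 0 <= b) (B_bound : forall x, `|B x| <= b * `|x|)
  (c0 : 0 <= c) (AinvB_bound : forall x, `|Ainv (B x)| <= c * `|x|)
  (C_onto : forall v, exists2 y, D y & A y - B y = v)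
  (hS : C0_semigroup S) (gS : generates S D (fun x => - (A x - B x)))
  (ubp : uniform_boundedness V).

Lemma norm_Ainv_perturbed_sub tau v : 0 < tau ->
  `|Ainv (S tau v - v)| <= (1 + c) * (tau * expR (tau * b) * `|v|).
Proof.
move=> tau0; have [y Dy <-] := C_onto v; set Cy := A y - B y.
have [DSy CSy] := generates_comm hS gS (ltW tau0) Dy.
rewrite (is_linearN (C0_semigroup_lin hS (ltW tau0))) in CSy; move/oppr_inj: CSy => CSy.
have [Dd /= Cd] := generates_oppB hS gS (A := fun x => A x - B x) erefl DSy Dy.
rewrite -CSy -Cd (is_linearB Ainv_lin) Ainv_A //; apply: le_trans (ler_normB _ _) _.
have := perturbed_lipschitz E_contr gE b0 B_bound hS gS ubp generator_dom_dense tau0 Dy.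
rewrite -normrN opprB -/Cy => Sy; have := AinvB_bound (S tau y - y).
have := ler_wpM2l c0 Sy; rewrite mulrDl mul1r; lra.
Qed.

End InverseEstimates.

Section DiagonalSemigroup.
Variables (R : realType) (V1 V2 : normedModType R)
  (E1 : R -> V1 -> V1) (E2 : R -> V2 -> V2).
Hypotheses (hE1 : contraction_C0_semigroup E1) (hE2 : contraction_C0_semigroup E2).
Local Notation E := (fun t (v : V1 * V2) => (E1 t v.1, E2 t v.2)).

Lemma diag_contraction t v : 0 <= t -> `|E t v| <= `|v|.
Proof.
by move=> t0; rewrite !prod_normE ge_max !le_max hE1.2 // hE2.2 // orbT.
Qed.

Lemma diag_C0_semigroup : C0_semigroup E.
Proof.
have [[l1 z1 a1 _ c1] _] := hE1; have [[l2 z2 a2 _ c2] _] := hE2.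
split=> [t t0 a [x1 x2] [y1 y2] | [x1 x2] | s t [x1 x2] s0 t0 | t t0 | [x1 x2]].
- rewrite -[LHS]/(E1 t (a *: x1 + y1), E2 t (a *: x2 + y2)).
  by rewrite (l1 t t0) (l2 t t0).
- by rewrite /= z1 z2.
- by rewrite /= a1 // a2.
- by exists 1 => v; rewrite mul1r diag_contraction.
- exact: cvg_pair (c1 x1) (c2 x2).
Qed.

Lemma diag_generates D1 D2 G1 G2 : generates E1 D1 G1 -> generates E2 D2 G2 ->
  generates E [set v | D1 v.1 /\ D2 v.2] (fun v => (G1 v.1, G2 v.2)).
Proof.
move=> g1 g2 [x1 x2].
have q_pair : (fun t => t^-1 *: (E t (x1, x2) - (x1, x2))) =
    (fun t => (t^-1 *: (E1 t x1 - x1), t^-1 *: (E2 t x2 - x2))) by [].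
have q_cvg : D1 x1 /\ D2 x2 -> (fun t => t^-1 *: (E t (x1, x2) - (x1, x2))) @ 0^'+ -->
    (G1 x1, G2 x2).
  by move=> [D1x D2x]; rewrite q_pair; exact: cvg_pair ((g1 x1).2 D1x) ((g2 x2).2 D2x).
split=> //; split=> [Dx | /cvg_ex[l ql]].
  by apply/cvg_ex; exists (G1 x1, G2 x2); exact: q_cvg.
rewrite q_pair in ql; split; [apply/(g1 x1).1 | apply/(g2 x2).1]; apply/cvg_ex.
  by exists l.1; exact: cvg_fst_of ql.
by exists l.2; exact: cvg_snd_of ql.
Qed.

End DiagonalSemigroup.

Section SplitStep.
Variables (R : realType) (V1 V2 : completeNormedModType R)
  (D1 : set V1) (A1 : V1 -> V1) (E1 : R -> V1 -> V1)
  (D2 : set V2) (A2 : V2 -> V2) (E2 : R -> V2 -> V2)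
  (B1 : V2 -> V1) (B2 : V1 -> V2) (Ainv : V1 * V2 -> V1 * V2).
Hypotheses (hE1 : contraction_C0_semigroup E1) (gE1 : generates E1 D1 (fun x => - A1 x))
  (hE2 : contraction_C0_semigroup E2) (gE2 : generates E2 D2 (fun x => - A2 x))
  (lB1 : is_linear B1) (bB1 : exists M : R, forall y, `|B1 y| <= M * `|y|)
  (lB2 : is_linear B2) (bB2 : exists M : R, forall x, `|B2 x| <= M * `|x|).
Local Notation DA := [set v : V1 * V2 | D1 v.1 /\ D2 v.2].
Local Notation cA := (fun v : V1 * V2 => (A1 v.1, A2 v.2)).
Local Notation cB := (fun v : V1 * V2 => (B1 v.2, B2 v.1)).
Local Notation E := (fun t (v : V1 * V2) => (E1 t v.1, E2 t v.2)).
Hypothesis iA : bounded_inverse DA cA Ainv.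

Let hE : C0_semigroup E := diag_C0_semigroup hE1 hE2.
Let E_contr t v : 0 <= t -> `|E t v| <= `|v| := diag_contraction hE1 hE2 v.
Let gE : generates E DA (fun v => - cA v) := diag_generates gE1 gE2.
Let Ainv_bl : bounded_linear2 Ainv := let: And3 bl _ _ := iA in bl.
Let Ainv_lin : is_linear Ainv := Ainv_bl.1.
Let Ainv_dom v : DA (Ainv v) := (let: And3 _ inv _ := iA in inv v).1.
Let A_Ainv v : cA (Ainv v) = v := (let: And3 _ inv _ := iA in inv v).2.
Let Ainv_A v : DA v -> Ainv (cA v) = v := let: And3 _ _ inv := iA in inv v.

Lemma cB_bounded_linear2 : bounded_linear2 cB.
Proof.
split=> [a [x1 x2] [y1 y2] | ].
  by rewrite -[LHS]/(B1 (a *: x2 + y2), B2 (a *: x1 + y1)) lB1 lB2.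
have [M1 BM1] := bB1; have [M2 BM2] := bB2; exists (`|M1| + `|M2|) => v.
apply: le_trans (norm2_le_normD _) _; rewrite mulrDl.
apply: lerD; [apply: le_trans (BM1 _) _ | apply: le_trans (BM2 _) _];
  (apply: le_trans (ler_wpM2r (normr_ge0 _) (ler_norm _)) _;
   apply: ler_wpM2l; [exact: normr_ge0 | exact: norm_snd_le_norm2 || exact: norm_fst_le_norm2]).
Qed.

Let b := opnorm2 cB.
Let c := opnorm2 (fun v => Ainv (cB v)).

Let b0 : 0 <= b := opnorm2_ge0 cB_bounded_linear2.
Let c0 : 0 <= c := opnorm2_ge0 (bounded_linear2_comp Ainv_bl cB_bounded_linear2).

Lemma norm_cB v : `|cB v| <= b * `|v|.
Proof.
have Bb (w : V1 * V2) : norm2 (cB w) <= b * (`|w.1| + `|w.2|).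
  apply: le_trans (norm2_le_opnorm2 cB_bounded_linear2 w) _.
  by rewrite ler_wpM2l // norm2_le_normD.
have v1 : `|v.1| <= `|v| by rewrite prod_normE le_max lexx.
have v2 : `|v.2| <= `|v| by rewrite prod_normE le_max lexx orbT.
rewrite [X in X <= _]prod_normE ge_max; apply/andP; split.
  have := norm_fst_le_norm2 (cB (0, v.2)); have := Bb (0, v.2).
  rewrite /= normr0 add0r => h1 h2; exact: le_trans h2 (le_trans h1 (ler_wpM2l b0 v2)).
have := norm_snd_le_norm2 (cB (v.1, 0)); have := Bb (v.1, 0).
rewrite /= normr0 addr0 => h1 h2; exact: le_trans h2 (le_trans h1 (ler_wpM2l b0 v1)).
Qed.

Lemma norm_Ainv_cB v : `|Ainv (cB v)| <= 2 * c * `|v|.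
Proof.
apply: le_trans (norm_le_norm2 _) _.
apply: le_trans (norm2_le_opnorm2 (bounded_linear2_comp Ainv_bl cB_bounded_linear2) v) _.
rewrite (mulrC 2) -mulrA -/c; apply: ler_wpM2l => //.
exact: (norm2_le_norm v).
Qed.

Local Notation Q tau w := (Ainv (cB w) - E tau (Ainv (cB w))).

Lemma Xop_pair tau v : 0 < tau -> (Xop E1 B1 tau v.2, Xop E2 B2 tau v.1) = Q tau v.
Proof.
move=> tau0; have E1K s u : 0 <= s <= tau -> `|E s u| <= 1 * `|u|.
  by move=> /andP[s0 _]; rewrite mul1r E_contr.
have := riemann_sum_generator_cvg hE tau0 ler01 E1K gE (Ainv_dom (cB v)).
rewrite A_Ainv => QR; rewrite [RHS]surjective_pairing.
by rewrite /Xop (Rint_fst QR) (Rint_snd QR).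
Qed.

Lemma Xop0 tau : 0 < tau -> Xop E1 B1 tau 0 = 0.
Proof.
move=> tau0; have := Xop_pair (0 : V1 * V2) tau0.
have -> : cB 0 = 0 by rewrite /= (is_linear0 lB1) (is_linear0 lB2).
rewrite (is_linear0 Ainv_lin) (is_linear0 (C0_semigroup_lin hE (ltW tau0))) subrr.
by case.
Qed.

Lemma split_step_decomp tau v : 0 < tau ->
  split_step E1 E2 B1 B2 tau v = E tau v + Q tau (E1 tau v.1, v.2) + Q tau (Xop E1 B1 tau v.2, 0).
Proof.
move=> tau0; rewrite -!Xop_pair //= Xop0 //.
rewrite -[RHS]/(E1 tau v.1 + Xop E1 B1 tau v.2 + 0,
  E2 tau v.2 + Xop E2 B2 tau (E1 tau v.1) + Xop E2 B2 tau (Xop E1 B1 tau v.2)).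
by rewrite addr0 /split_step [_ + E2 tau v.2]addrC addrA.
Qed.

Let Ainv_E_sub := norm_Ainv_semigroup_sub hE E_contr gE Ainv_dom A_Ainv Ainv_A Ainv_lin.
Let E_sub_Ainv := norm_semigroup_sub_Ainv hE E_contr gE Ainv_dom A_Ainv.

Lemma norm_Ainv_split_step_sub tau v : 0 < tau ->
  `|Ainv (split_step E1 E2 B1 B2 tau v - v)| <= tau * (1 + 2 * c + 2 * c * (tau * b)) * `|v|.
Proof.
move=> tau0; rewrite split_step_decomp // addrAC (addrAC (E tau v)).
rewrite -[E tau v - v]opprB (is_linearD Ainv_lin) (is_linearD Ainv_lin) (is_linearN Ainv_lin).
have AinvQ w : `|Ainv (Q tau w)| <= tau * (2 * c * `|w|).
  by apply: le_trans (Ainv_E_sub _ tau0) _; rewrite ler_wpM2l ?norm_Ainv_cB // ltW.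
have w1 : `|(E1 tau v.1, v.2)| <= `|v|.
  by rewrite !prod_normE ge_max !le_max (hE1.2 _ _ (ltW tau0)) lexx orbT.
have w2 : `|(Xop E1 B1 tau v.2, 0 : V2)| <= tau * b * `|v|.
  have := E_sub_Ainv (cB v) tau0; rewrite -(Xop_pair v tau0) => QE.
  rewrite prod_normE ge_max normr0 !mulr_ge0 ?normr_ge0 ?(ltW tau0) // andbT.
  apply: le_trans (le_trans _ QE) _; first by rewrite prod_normE le_max lexx.
  by rewrite -mulrA ler_wpM2l ?(ltW tau0) // norm_cB.
have tc0 : 0 <= tau * (2 * c) by rewrite mulr_ge0 ?mulr_ge0 ?(ltW tau0).
have := ler_wpM2l tc0 w1; have := ler_wpM2l tc0 w2.
have := AinvQ (E1 tau v.1, v.2); have := AinvQ (Xop E1 B1 tau v.2, 0).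
have := Ainv_E_sub v tau0 => hv hQ2 hQ1 hw2 hw1.
apply: le_trans (ler_normD _ _) _; apply: le_trans (lerD (ler_normD _ _) (lexx _)) _.
rewrite normrN; lra.
Qed.

Variable S : R -> V1 * V2 -> V1 * V2.
Local Notation cC := (fun v : V1 * V2 => cA v - cB v).
Hypotheses (iC : exists Cinv, bounded_inverse DA cC Cinv)
  (hS : C0_semigroup S) (gS : generates S DA (fun v => - cC v)).

(* [2 * c] bounds A^-1 B in the max norm, and [norm2_le_norm] costs another factor 2. *)
Lemma opnorm2_Ainv_split_step_error tau : 0 < tau ->
  opnorm2 (fun v => Ainv (split_step E1 E2 B1 B2 tau v - S tau v))
  <= (2 + 8 * `|c|) * (1 + expR (tau * b)) * tau.
Proof.
move=> tau0; have C_onto v : exists2 y, DA y & cA y - cB y = v.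
  by have [Cinv [_ CinvP _]] := iC; exists (Cinv v); case: (CinvP v).
have c0' : 0 <= 2 * c by rewrite mulr_ge0.
have AinvS_sub := norm_Ainv_perturbed_sub hE E_contr gE Ainv_dom A_Ainv Ainv_A Ainv_lin
  b0 norm_cB c0' norm_Ainv_cB C_onto hS gS (@prod_uniform_boundedness R V1 V2).
apply: opnorm2_le => v nv; have v1 : `|v| <= 1 := le_trans (norm_le_norm2 v) nv.
apply: le_trans (norm2_le_norm _) _.
have -> : split_step E1 E2 B1 B2 tau v - S tau v =
    (split_step E1 E2 B1 B2 tau v - v) - (S tau v - v) by rewrite opprB subrKA.
rewrite (is_linearB Ainv_lin); apply: le_trans (ler_wpM2l _ (ler_normB _ _)) _ => //.
have := norm_Ainv_split_step_sub v tau0; have := AinvS_sub _ v tau0.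
rewrite ger0_norm //; set e := expR (tau * b); have e1 : 1 + tau * b <= e := expR_ge1Dx _.
have tc0 : 0 <= tau * c by rewrite mulr_ge0 // ltW.
have q1 : tau * (1 + 2 * c + 2 * c * (tau * b)) * `|v| <= tau * (1 + 2 * c + 2 * c * e).
  rewrite -[X in _ <= X]mulr1; apply: ler_pM; rewrite ?normr_ge0 //.
    by rewrite mulr_ge0 ?(ltW tau0) // !addr_ge0 ?mulr_ge0 // ltW.
  by rewrite ler_wpM2l ?(ltW tau0) // lerD2l ler_wpM2l //; lra.
have q2 : (1 + 2 * c) * (tau * e * `|v|) <= (1 + 2 * c) * (tau * e).
  rewrite ler_wpM2l ?addr_ge0 // -[X in _ <= X]mulr1 ler_wpM2l //.
  by rewrite mulr_ge0 ?expR_ge0 // ltW.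
have te0 : 0 <= tau * c * e by rewrite mulr_ge0 ?expR_ge0.
lra.
Qed.

End SplitStep.

Theorem lemma4p2 (R : realType) :
  exists C2 : R -> R -> R, (forall a b, 0 < C2 a b) /\
  forall (V1 V2 : completeNormedModType R)
    (D1 : set V1) (A1 : V1 -> V1) (E1 : R -> V1 -> V1)
    (D2 : set V2) (A2 : V2 -> V2) (E2 : R -> V2 -> V2)
    (B1 : V2 -> V1) (B2 : V1 -> V2)
    (Ainv : V1 * V2 -> V1 * V2) (S : R -> V1 * V2 -> V1 * V2),
    contraction_C0_semigroup E1 -> generates E1 D1 (fun x => - A1 x) ->
    contraction_C0_semigroup E2 -> generates E2 D2 (fun x => - A2 x) ->
    is_linear B1 -> (exists M : R, forall y, `|B1 y| <= M * `|y|) ->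
    is_linear B2 -> (exists M : R, forall x, `|B2 x| <= M * `|x|) ->
    let DA := [set v : V1 * V2 | D1 v.1 /\ D2 v.2] in
    let cA := fun v : V1 * V2 => (A1 v.1, A2 v.2) in
    let cB := fun v : V1 * V2 => (B1 v.2, B2 v.1) in
    let cC := fun v : V1 * V2 => cA v - cB v in
    bounded_inverse DA cA Ainv ->
    (exists Cinv, bounded_inverse DA cC Cinv) ->
    C0_semigroup S -> generates S DA (fun v => - cC v) ->
    forall tau : R, 0 < tau ->
      opnorm2 (fun v => Ainv (split_step E1 E2 B1 B2 tau v - S tau v))
      <= C2 (opnorm2 Ainv) (opnorm2 (fun v => Ainv (cB v)))
           * (1 + expR (tau * opnorm2 cB)) * tau.
Proof.
exists (fun _ c => 2 + 8 * `|c|); split=> [a c | V1 V2 D1 A1 E1 D2 A2 E2 B1 B2 Ainv S].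
  by rewrite ltr_pwDl ?mulr_ge0 ?normr_ge0.
move=> hE1 gE1 hE2 gE2 lB1 bB1 lB2 bB2 DA cA cB cC iA iC hS gS tau tau0.
exact (opnorm2_Ainv_split_step_error hE1 gE1 hE2 gE2 lB1 bB1 lB2 bB2 iA iC hS gS tau0).
Qed.
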